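(* For $\tau\in\mathbb{R}$, $$\mu_0(\tau;0):=\int_{-\infty}^{\infty}\exp(-x^6+\tau x^4)\,dx$$ is given by $$\mu_0(\tau;0)=\tfrac13\Gamma\!\left(\tfrac16\right){}_2F_2\!\left(\tfrac1{12},\tfrac7{12};\tfrac13,\tfrac23;\tfrac{4\tau^3}{27}\right)+\tfrac13\tau\Gamma\!\left(\tfrac56\right){}_2F_2\!\left(\tfrac5{12},\tfrac{11}{12};\tfrac23,\tfrac43;\tfrac{4\tau^3}{27}\right)+\frac{\tau^2\sqrt{\pi}}{12}{}_2F_2\!\left(\tfrac34,\tfrac54;\tfrac43,\tfrac53;\tfrac{4\tau^3}{27}\right).$$
   Context: ${}_2F_2(a_1,a_2;b_1,b_2;z)$ denotes the generalised hypergeometric function with upper parameters $a_1,a_2$ and lower parameters $b_1,b_2$. *)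

From Stdlib Require Import Reals.
From Coquelicot Require Import Coquelicot.
Open Scope R_scope.

Fixpoint poch (a : R) (n : nat) : R :=
  match n with
  | O => 1
  | S m => poch a m * (a + INR m)
  end.

(* Generalised hypergeometric function 2F2(a1,a2;b1,b2;z) as the sum of its
   (everywhere convergent) power series. *)
Definition hyp2F2 (a1 a2 b1 b2 z : R) : R :=
  Series (fun n => poch a1 n * poch a2 n / (poch b1 n * poch b2 n)
                   * z ^ n / INR (Factorial.fact n)).

Definition Gamma (s : R) : R :=
  RInt_gen (fun t => Rpower t (s - 1) * exp (- t))
           (at_right 0) (Rbar_locally p_infty).

From Stdlib Require Import Reals.
From Coquelicot Require Import Coquelicot.
From Stdlib Require Import Psatz Factorial Classical.
Open Scope R_scope.

(* Expand [exp (tau x^4)] in its Taylor series and integrate termwise.  With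
   [I m = int_0^oo x^m exp (-x^6) dx = Gamma ((m+1)/6) / 6], the [k]-th term
   contributes [2 tau^k / k! * I (4k)] to the integral over the line.
   Integration by parts gives [I (m+6) = (m+1)/6 * I m], so grouping [k] by its
   residue mod 3 turns the series into three 2F2 series in [4 tau^3 / 27], whose
   leading coefficients involve [I 0], [I 4] and [I 8 = sqrt PI / 12]; the last
   follows from [u = x^3] and the Gaussian integral.  Termwise integration is
   justified by the Taylor remainder bound for [exp] together with
   [|tau| x^4 <= 4 |tau|^3 + x^6 / 2]: the truncation error of the integral over
   [0, b] is bounded uniformly in [b] by a sequence tending to 0. *)

(** * Real-analysis preliminaries *)

Lemma exp_le_compat x y : x <= y -> exp x <= exp y.
Proof. intros [Hlt | ->]; [apply Rlt_le, exp_increasing, Hlt | apply Rle_refl]. Qed.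

Lemma INR_fact_pos n : 0 < INR (fact n).
Proof. apply lt_0_INR, lt_O_fact. Qed.

Lemma RInt_unique_R (f : R -> R) a b l : is_RInt f a b l -> RInt f a b = l.
Proof. apply (@is_RInt_unique R_CompleteNormedModule). Qed.

Lemma is_RInt_RInt_R (f : R -> R) a b : ex_RInt f a b -> is_RInt f a b (RInt f a b).
Proof. apply (@RInt_correct R_CompleteNormedModule). Qed.

Lemma ex_RInt_derivable (f : R -> R) a b : (forall x, ex_derive f x) -> ex_RInt f a b.
Proof.
  intros Hf. apply (@ex_RInt_continuous R_CompleteNormedModule).
  intros x _. apply (@ex_derive_continuous R_AbsRing R_NormedModule), Hf.
Qed.

Lemma is_RInt_sum_n (g : nat -> R -> R) (I : nat -> R) a b N :
  (forall k, is_RInt (g k) a b (I k)) ->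
  is_RInt (fun x => sum_n (fun k => g k x) N) a b (sum_n I N).
Proof.
  intros Hg. induction N as [|N IH].
  - rewrite sum_O. apply (is_RInt_ext (g 0%nat)); [intros; now rewrite sum_O | apply Hg].
  - rewrite sum_Sn. apply (is_RInt_ext (fun x => plus (sum_n (fun k => g k x) N) (g (S N) x))).
    + intros x _. now rewrite sum_Sn.
    + now apply (@is_RInt_plus R_NormedModule).
Qed.

Lemma is_lim_sum_n (g : nat -> R -> R) (l : nat -> R) (x : Rbar) N :
  (forall k, is_lim (g k) x (l k)) -> is_lim (fun y => sum_n (fun k => g k y) N) x (sum_n l N).
Proof.
  intros Hg. induction N as [|N IH].
  - rewrite sum_O. apply (is_lim_ext (g 0%nat)); [intros; now rewrite sum_O | apply Hg].
  - rewrite sum_Sn. apply (is_lim_ext (fun y => sum_n (fun k => g k y) N + g (S N) y)).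
    + intros y. now rewrite sum_Sn.
    + now apply is_lim_plus'.
Qed.

Lemma pow_le_fact_mul_exp y n : 0 <= y -> y ^ n <= INR (fact n) * exp y.
Proof.
  intros Hy.
  assert (Hterm : y ^ n / INR (fact n) <= exp y).
  { eapply Rle_trans; [| apply (exp_ge_taylor y n Hy)].
    assert (Hnonneg : forall k, 0 <= y ^ k / INR (fact k)).
    { intros k. apply Rdiv_le_0_compat; [apply pow_le; lra | apply INR_fact_pos]. }
    destruct n as [|n]; [simpl; lra |].
    rewrite tech5. pose proof (cond_pos_sum _ n Hnonneg). lra. }
  pose proof (INR_fact_pos n).
  replace (y ^ n) with (INR (fact n) * (y ^ n / INR (fact n))) by (field; lra).
  apply Rmult_le_compat_l; lra.
Qed.

Lemma is_lim_pow_mul_exp_opp_pow n p : (1 <= p)%nat ->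
  is_lim (fun x => x ^ n * exp (- x ^ p)) p_infty 0.
Proof.
  intros Hp.
  (* Squeeze by [(n+1)! / x], from [x^(n+1) <= (x^p)^(n+1) <= (n+1)! e^(x^p)] for [x >= 1]. *)
  apply (is_lim_le_le_loc (fun _ => 0) (fun x => INR (fact (S n)) * / x)).
  - exists 1. intros x Hx. split.
    + apply Rmult_le_pos; [apply pow_le; lra | apply Rlt_le, exp_pos].
    + assert (Hxp : 0 <= x ^ p) by (apply pow_le; lra).
      assert (Hpow : x ^ n * x <= (x ^ p) ^ S n).
      { rewrite <- pow_mult, Rmult_comm, tech_pow_Rmult. apply Rle_pow; [lra | nia]. }
      pose proof (pow_le_fact_mul_exp (x ^ p) (S n) Hxp).
      pose proof (exp_pos (x ^ p)).
      rewrite exp_Ropp.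
      apply Rmult_le_reg_r with (x * exp (x ^ p)); [nra |].
      field_simplify; [nra | lra | lra].
  - apply is_lim_const.
  - replace (Finite 0) with (Rbar_mult (INR (fact (S n))) (Rbar_inv p_infty)) by (simpl; f_equal; ring).
    apply is_lim_scal_l, is_lim_inv; [apply is_lim_id | discriminate].
Qed.

Lemma ex_lim_p_infty_monotone_bounded (F : R -> R) (B : R) :
  (forall x y, 0 <= x <= y -> F x <= F y) -> (forall x, 0 <= x -> F x <= B) ->
  exists l : R, is_lim F p_infty l.
Proof.
  intros Hmono Hbound.
  set (E := fun z => exists x, 0 <= x /\ z = F x).
  assert (HE : bound E) by (exists B; intros z [x [Hx ->]]; auto).
  assert (HE0 : exists z, E z) by (exists (F 0), 0; split; [lra | reflexivity]).
  destruct (completeness E HE HE0) as [l [Hub Hlub]].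
  exists l. apply is_lim_spec. intros eps.
  assert (Hnot_ub : exists x, 0 <= x /\ l - eps < F x).
  { apply NNPP. intros Hno.
    assert (l <= l - eps); [| pose proof (cond_pos eps); lra].
    apply Hlub. intros z [x [Hx ->]].
    apply Rnot_lt_le. intros Hlt. apply Hno. now exists x. }
  destruct Hnot_ub as [x0 [Hx0 Hlt]].
  exists x0. intros x Hx.
  assert (F x0 <= F x) by (apply Hmono; lra).
  assert (F x <= l) by (apply Hub; exists x; split; [lra | reflexivity]).
  rewrite Rabs_left1 by lra. lra.
Qed.

Lemma is_lim_uniform_approx (F : R -> R) (Fn : nat -> R -> R) (P E : nat -> R) (L : R) :
  (forall n, is_lim (Fn n) p_infty (P n)) ->
  (forall n b, 0 <= b -> Rabs (F b - Fn n b) <= E n) ->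
  is_lim_seq E 0 -> is_lim_seq P L -> is_lim F p_infty L.
Proof.
  intros HFn Happrox HE HP.
  apply is_lim_spec. intros eps.
  assert (Heps3 : 0 < eps / 3) by (pose proof (cond_pos eps); lra).
  apply is_lim_seq_spec in HE. apply is_lim_seq_spec in HP.
  destruct (HE (mkposreal _ Heps3)) as [N1 HN1].
  destruct (HP (mkposreal _ Heps3)) as [N2 HN2].
  set (n := (N1 + N2)%nat).
  specialize (HN1 n ltac:(lia)). specialize (HN2 n ltac:(lia)). simpl in HN1, HN2.
  rewrite Rminus_0_r in HN1.
  destruct (proj2 (is_lim_spec _ _ _) (HFn n) (mkposreal _ Heps3)) as [M HM].
  exists (Rmax M 0). intros b Hb.
  specialize (HM b (Rle_lt_trans _ _ _ (Rmax_l _ _) Hb)).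
  specialize (Happrox n b (Rlt_le _ _ (Rle_lt_trans _ _ _ (Rmax_r _ _) Hb))).
  simpl in HM. pose proof (Rle_abs (E n)).
  replace (F b - L) with ((F b - Fn n b) + (Fn n b - P n) + (P n - L)) by ring.
  pose proof (Rabs_triang (F b - Fn n b + (Fn n b - P n)) (P n - L)).
  pose proof (Rabs_triang (F b - Fn n b) (Fn n b - P n)). lra.
Qed.

Lemma is_lim_seq_0_eventually_halving (a : nat -> R) (p N0 : nat) : (0 < p)%nat ->
  (forall n, 0 <= a n) -> (forall n, (N0 <= n)%nat -> a (n + p)%nat <= a n / 2) ->
  is_lim_seq a 0.
Proof.
  intros Hp Hpos Hhalf.
  assert (Hiter : forall j n, (N0 <= n)%nat -> a (n + p * j)%nat <= a n / 2 ^ j).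
  { induction j as [|j IH]; intros n Hn.
    - rewrite Nat.mul_0_r, Nat.add_0_r. simpl. lra.
    - replace (n + p * S j)%nat with (n + p * j + p)%nat by lia.
      eapply Rle_trans; [apply Hhalf; lia |].
      specialize (IH n Hn). pose proof (pow_lt 2 j ltac:(lra)).
      simpl. unfold Rdiv in *. rewrite Rinv_mult. nra. }
  assert (Hmax : forall q, exists c, forall i, (i < q)%nat -> a (N0 + i)%nat <= c).
  { induction q as [|q [c Hc]]; [now exists 0; intros i Hi; lia |].
    exists (Rmax c (a (N0 + q)%nat)). intros i Hi.
    destruct (Nat.eq_dec i q) as [-> | Hne]; [apply Rmax_r |].
    eapply Rle_trans; [apply Hc; lia | apply Rmax_l]. }
  destruct (Hmax p) as [c Hc].
  apply (is_lim_seq_le_le_loc (fun _ => 0) _ (fun n => c * (/ 2) ^ ((n - N0) / p))).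
  - exists N0. intros n Hn. split; [apply Hpos |].
    set (j := ((n - N0) / p)%nat). set (i := ((n - N0) mod p)%nat).
    assert (Hn' : n = (N0 + i + p * j)%nat).
    { pose proof (Nat.div_mod (n - N0) p ltac:(lia)). unfold i, j. lia. }
    assert (Hi : (i < p)%nat) by (apply Nat.mod_upper_bound; lia).
    rewrite Hn' at 1. eapply Rle_trans; [apply Hiter; lia |].
    rewrite pow_inv. unfold Rdiv. apply Rmult_le_compat_r.
    + apply Rlt_le, Rinv_0_lt_compat, pow_lt. lra.
    + apply Hc, Hi.
  - apply is_lim_seq_const.
  - replace (Finite 0) with (Rbar_mult c 0) by (simpl; f_equal; ring).
    apply is_lim_seq_scal_l.
    apply (is_lim_seq_subseq (fun j => (/ 2) ^ j)).
    + intros P [N HN]. exists (N0 + p * N)%nat. intros n Hn. apply HN.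
      apply Nat.div_le_lower_bound; lia.
    + apply is_lim_seq_geom. rewrite Rabs_pos_eq; lra.
Qed.

Lemma is_RInt_gen_primitive {Fa Fb : (R -> Prop) -> Prop} {FFa : Filter Fa} {FFb : Filter Fb}
    (f F : R -> R) (la lb : R) :
  filter_prod Fa Fb (fun ab => is_RInt f (fst ab) (snd ab) (F (snd ab) - F (fst ab))) ->
  filterlim F Fa (locally la) -> filterlim F Fb (locally lb) ->
  is_RInt_gen f Fa Fb (lb - la).
Proof.
  intros HI Ha Hb P HP.
  assert (Hlim : filterlim (fun ab : R * R => F (snd ab) - F (fst ab)) (filter_prod Fa Fb)
                (locally (lb - la))).
  { eapply (filterlim_comp_2 (fun ab : R * R => F (snd ab)) (fun ab : R * R => F (fst ab)) Rminus).
    - eapply filterlim_comp; [apply filterlim_snd | exact Hb].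
    - eapply filterlim_comp; [apply filterlim_fst | exact Ha].
    - apply (filterlim_comp_2 (G := locally lb) (H := locally (opp la)) fst (fun x => opp (snd x)) plus).
      + apply filterlim_fst.
      + eapply filterlim_comp; [apply filterlim_snd | apply (@filterlim_opp R_AbsRing R_NormedModule la)].
      + apply (@filterlim_plus R_AbsRing R_NormedModule lb (opp la)). }
  unfold filtermapi.
  apply (filter_imp (fun ab => is_RInt f (fst ab) (snd ab) (F (snd ab) - F (fst ab))
                               /\ P (F (snd ab) - F (fst ab)))).
  - intros ab [Hab HPab]. now exists (F (snd ab) - F (fst ab)).
  - now apply filter_and; [| apply Hlim].
Qed.

Lemma RInt_0_opp_even (f : R -> R) x : (forall y, f (- y) = f y) -> (forall a b, ex_RInt f a b) ->
  RInt f 0 (- x) = - RInt f 0 x.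
Proof.
  intros Heven Hex.
  assert (Hopp : is_RInt (fun y => opp (f (- y))) 0 x (RInt f 0 (- x))).
  { apply (@is_RInt_comp_opp R_NormedModule). rewrite Ropp_0. apply is_RInt_RInt_R, Hex. }
  assert (Hneg : is_RInt (fun y => opp (f (- y))) 0 x (opp (RInt f 0 x))).
  { apply (@is_RInt_opp R_NormedModule). eapply is_RInt_ext; [| apply is_RInt_RInt_R, Hex].
    intros y _. symmetry. apply Heven. }
  rewrite <- (RInt_unique_R _ _ _ _ Hopp), (RInt_unique_R _ _ _ _ Hneg). reflexivity.
Qed.

Lemma is_lim_RInt_m_infty_even (f : R -> R) (l : R) :
  (forall y, f (- y) = f y) -> (forall a b, ex_RInt f a b) ->
  is_lim (fun b => RInt f 0 b) p_infty l -> is_lim (fun b => RInt f 0 b) m_infty (- l).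
Proof.
  intros Heven Hex Hl.
  apply (is_lim_ext (fun b => - RInt f 0 (- b))).
  - intros b. now rewrite RInt_0_opp_even, Ropp_involutive.
  - apply (is_lim_opp _ _ (Finite l)).
    apply (is_lim_comp _ _ m_infty (Finite l) p_infty); [exact Hl | | apply filter_forall; discriminate].
    apply (is_lim_opp (fun y => y) m_infty m_infty), is_lim_id.
Qed.

Lemma is_RInt_gen_of_is_lim (f : R -> R) (la lb : R) : (forall a b, ex_RInt f a b) ->
  is_lim (fun b => RInt f 0 b) m_infty la -> is_lim (fun b => RInt f 0 b) p_infty lb ->
  is_RInt_gen f (Rbar_locally m_infty) (Rbar_locally p_infty) (lb - la).
Proof.
  intros Hex Hla Hlb.
  apply (is_RInt_gen_primitive f (fun b => RInt f 0 b)); [| exact Hla | exact Hlb].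
  apply (Filter_prod _ _ _ (fun _ => True) (fun _ => True)); [now exists 0 | now exists 0 |].
  intros a b _ _. simpl.
  assert (Hchasles : plus (RInt f 0 a) (RInt f a b) = RInt f 0 b) by (apply RInt_Chasles; apply Hex).
  unfold plus in Hchasles; simpl in Hchasles.
  replace (RInt f 0 b - RInt f 0 a) with (RInt f a b) by lra.
  apply is_RInt_RInt_R, Hex.
Qed.

Lemma sum_n_group3 (a : nat -> R) M :
  sum_n a (3 * M + 2) = sum_n (fun n => a (3 * n)%nat + a (3 * n + 1)%nat + a (3 * n + 2)%nat) M.
Proof.
  induction M as [|M IH].
  - rewrite sum_O. simpl. rewrite !sum_Sn, sum_O. unfold plus; simpl. ring.
  - replace (3 * S M + 2)%nat with (S (S (S (3 * M + 2)))) by lia.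
    rewrite !sum_Sn, IH. unfold plus; simpl. rewrite !Rplus_assoc.
    f_equal. f_equal; [| f_equal]; f_equal; lia.
Qed.

Lemma seq_eq_scal_of_ratio (u v q : nat -> R) (c : R) :
  u 0%nat = c * v 0%nat -> (forall n, u (S n) = u n * q n) -> (forall n, v (S n) = v n * q n) ->
  forall n, u n = c * v n.
Proof.
  intros H0 Hu Hv. induction n as [|n IH]; [exact H0 |].
  rewrite Hu, Hv, IH. ring.
Qed.

Lemma is_series_exp y : is_series (fun k => y ^ k / INR (fact k)) (exp y).
Proof.
  eapply is_series_ext; [| apply (is_exp_Reals y)].
  intros n. simpl. rewrite pow_n_pow. unfold scal; simpl; unfold mult; simpl. unfold Rdiv; ring.
Qed.

Lemma fact_mul_le_fact_add a b : (fact a * fact b <= fact (a + b))%nat.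
Proof.
  induction b as [|b IH]; [rewrite Nat.add_0_r; simpl; lia |].
  rewrite Nat.add_succ_r.
  change (fact (S b)) with (S b * fact b)%nat.
  change (fact (S (a + b))) with (S (a + b) * fact (a + b))%nat. nia.
Qed.

Lemma exp_sub_sum_n_le y N :
  Rabs (exp y - sum_n (fun k => y ^ k / INR (fact k)) N)
    <= Rabs y ^ S N / INR (fact (S N)) * exp (Rabs y).
Proof.
  set (a := fun k => y ^ k / INR (fact k)).
  set (c := Rabs y ^ S N / INR (fact (S N))).
  assert (Htail : is_series (fun k => a (S N + k)%nat) (exp y - sum_n a N)).
  { apply (is_series_incr_n a (S N)); [lia |].
    change (is_series a (plus (exp y - sum_n a N) (sum_n a N))).
    replace (plus (exp y - sum_n a N) (sum_n a N)) with (exp y) by (unfold plus; simpl; ring).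
    apply is_series_exp. }
  assert (Hmajor : is_series (fun k => c * (Rabs y ^ k / INR (fact k))) (c * exp (Rabs y)))
    by exact (is_series_scal c _ _ (is_series_exp (Rabs y))).
  (* [(N+1+k)! >= (N+1)! k!] bounds each tail term by the matching term of [c e^|y|] *)
  assert (Hle : forall k, Rabs (a (S N + k)%nat) <= c * (Rabs y ^ k / INR (fact k))).
  { intros k. unfold a, c.
    pose proof (INR_fact_pos (S N)). pose proof (INR_fact_pos k).
    pose proof (le_INR _ _ (fact_mul_le_fact_add (S N) k)) as Hf. rewrite mult_INR in Hf.
    assert (0 <= Rabs y ^ S N * Rabs y ^ k) by (apply Rmult_le_pos; apply pow_le, Rabs_pos).
    rewrite Rabs_div by apply Rgt_not_eq, INR_fact_pos.
    rewrite <- RPow_abs, pow_add, (Rabs_pos_eq (INR _)) by apply Rlt_le, INR_fact_pos.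
    replace (Rabs y ^ S N / INR (fact (S N)) * (Rabs y ^ k / INR (fact k)))
      with (Rabs y ^ S N * Rabs y ^ k / (INR (fact (S N)) * INR (fact k))) by (field; lra).
    apply Rmult_le_compat_l; [lra |]. apply Rinv_le_contravar; nra. }
  assert (Hex : ex_series (fun k => Rabs (a (S N + k)%nat))).
  { apply (@ex_series_le R_AbsRing R_CompleteNormedModule _ (fun k => c * (Rabs y ^ k / INR (fact k))));
      [| eexists; eauto].
    intros k. unfold norm; simpl; unfold abs; simpl. rewrite Rabs_Rabsolu. apply Hle. }
  rewrite <- (is_series_unique _ _ Htail), <- (is_series_unique _ _ Hmajor).
  eapply Rle_trans; [apply Series_Rabs, Hex |].
  apply Series_le; [| eexists; eauto]. intros k. split; [apply Rabs_pos | apply Hle].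
Qed.

(** * Hypergeometric series *)

Lemma poch_pos a n : 0 < a -> 0 < poch a n.
Proof.
  intros Ha. induction n as [|n IH]; simpl; [lra |].
  pose proof (pos_INR n). apply Rmult_lt_0_compat; lra.
Qed.

Lemma poch_le a b n : 0 < a <= b -> poch a n <= poch b n.
Proof.
  intros Hab. induction n as [|n IH]; simpl; [lra |].
  pose proof (pos_INR n). pose proof (poch_pos a n (proj1 Hab)).
  apply Rmult_le_compat; lra.
Qed.

Definition hyp2F2_term (a1 a2 b1 b2 z : R) (n : nat) : R :=
  poch a1 n * poch a2 n / (poch b1 n * poch b2 n) * z ^ n / INR (fact n).

Lemma hyp2F2_term_S a1 a2 b1 b2 z n : 0 < b1 -> 0 < b2 ->
  hyp2F2_term a1 a2 b1 b2 z (S n) = hyp2F2_term a1 a2 b1 b2 z n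
    * ((a1 + INR n) * (a2 + INR n) / ((b1 + INR n) * (b2 + INR n)) * z / (INR n + 1)).
Proof.
  intros Hb1 Hb2. unfold hyp2F2_term. simpl poch. rewrite fact_simpl, mult_INR, S_INR.
  pose proof (poch_pos b1 n Hb1). pose proof (poch_pos b2 n Hb2).
  pose proof (pos_INR n). pose proof (INR_fact_pos n).
  simpl pow. field. repeat split; lra.
Qed.

(* Only the parameter range needed here: termwise domination by the exponential series. *)
Lemma is_series_hyp2F2 a1 a2 b1 b2 z : 0 < a1 <= b1 -> 0 < a2 <= b2 ->
  is_series (hyp2F2_term a1 a2 b1 b2 z) (hyp2F2 a1 a2 b1 b2 z).
Proof.
  intros H1 H2. apply Series_correct.
  apply (@ex_series_le R_AbsRing R_CompleteNormedModule _ (fun n => Rabs z ^ n / INR (fact n)));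
    [| eexists; apply is_series_exp].
  intros n. unfold norm; simpl; unfold abs; simpl. unfold hyp2F2_term.
  pose proof (poch_pos a1 n (proj1 H1)). pose proof (poch_pos a2 n (proj1 H2)).
  pose proof (poch_le a1 b1 n H1). pose proof (poch_le a2 b2 n H2).
  pose proof (INR_fact_pos n).
  assert (Hratio : 0 <= poch a1 n * poch a2 n / (poch b1 n * poch b2 n) <= 1).
  { split; [apply Rdiv_le_0_compat; nra |].
    apply Rmult_le_reg_r with (poch b1 n * poch b2 n); [nra |].
    unfold Rdiv. rewrite Rmult_assoc, Rinv_l, Rmult_1_r, Rmult_1_l by nra. nra. }
  rewrite !Rabs_div, Rabs_mult, <- RPow_abs by (apply Rgt_not_eq; nra).
  rewrite (Rabs_pos_eq (INR _)), (Rabs_pos_eq (_ / _)) by lra.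
  unfold Rdiv at 2 3. apply Rmult_le_compat_r; [apply Rlt_le, Rinv_0_lt_compat; lra |].
  pose proof (pow_le (Rabs z) n (Rabs_pos z)). nra.
Qed.

Section HypergeometricCoefficients.

Variables (tau : R) (I : nat -> R).

Hypothesis I_add3 : forall k, I (k + 3)%nat = (4 * INR k + 1) * (4 * INR k + 7) / 36 * I k.

Let coef (k : nat) : R := tau ^ k / INR (fact k) * I k.

Let z : R := 4 * tau ^ 3 / 27.

Let ratio (k : nat) : R :=
  tau ^ 3 * (4 * INR k + 1) * (4 * INR k + 7) / (36 * ((INR k + 1) * (INR k + 2) * (INR k + 3))).

Lemma coef_add3 k : coef (k + 3) = coef k * ratio k.
Proof.
  unfold coef, ratio. rewrite I_add3, pow_add.
  replace (k + 3)%nat with (S (S (S k))) by lia. rewrite !fact_simpl, !mult_INR, !S_INR.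
  pose proof (pos_INR k). pose proof (INR_fact_pos k).
  field. repeat split; lra.
Qed.

Lemma coef_residue i a1 a2 b1 b2 : 0 < b1 -> 0 < b2 ->
  (forall n, ratio (3 * n + i) = (a1 + INR n) * (a2 + INR n) / ((b1 + INR n) * (b2 + INR n)) * z / (INR n + 1)) ->
  forall n, coef (3 * n + i) = coef i * hyp2F2_term a1 a2 b1 b2 z n.
Proof.
  intros Hb1 Hb2 Hratio.
  apply (seq_eq_scal_of_ratio (fun n => coef (3 * n + i)) _
           (fun n => (a1 + INR n) * (a2 + INR n) / ((b1 + INR n) * (b2 + INR n)) * z / (INR n + 1))).
  - unfold hyp2F2_term. simpl. field.
  - intros n. rewrite <- Hratio, <- coef_add3. f_equal. lia.
  - intros n. now apply hyp2F2_term_S.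
Qed.

Lemma is_series_coef_residue i a1 a2 b1 b2 : 0 < a1 <= b1 -> 0 < a2 <= b2 ->
  (forall n, ratio (3 * n + i) = (a1 + INR n) * (a2 + INR n) / ((b1 + INR n) * (b2 + INR n)) * z / (INR n + 1)) ->
  is_series (fun n => coef (3 * n + i)) (coef i * hyp2F2 a1 a2 b1 b2 z).
Proof.
  intros H1 H2 Hratio.
  apply (is_series_ext (fun n => coef i * hyp2F2_term a1 a2 b1 b2 z n)).
  - intros n. symmetry. apply coef_residue; [lra | lra | exact Hratio].
  - apply (@is_series_scal R_AbsRing R_NormedModule), is_series_hyp2F2; assumption.
Qed.

Lemma is_series_coef_grouped :
  is_series (fun n => coef (3 * n) + coef (3 * n + 1) + coef (3 * n + 2))
    (I 0 * hyp2F2 (1 / 12) (7 / 12) (1 / 3) (2 / 3) z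
     + tau * I 1 * hyp2F2 (5 / 12) (11 / 12) (2 / 3) (4 / 3) z
     + tau ^ 2 / 2 * I 2 * hyp2F2 (3 / 4) (5 / 4) (4 / 3) (5 / 3) z).
Proof.
  assert (Hratio : forall i n, ratio (3 * n + i)
            = tau ^ 3 * (12 * INR n + 4 * INR i + 1) * (12 * INR n + 4 * INR i + 7)
              / (36 * ((3 * INR n + INR i + 1) * (3 * INR n + INR i + 2) * (3 * INR n + INR i + 3)))).
  { intros i n. unfold ratio. rewrite plus_INR, mult_INR. simpl (INR 3). f_equal; ring. }
  replace (I 0) with (coef 0) by (unfold coef; simpl; field).
  replace (tau * I 1) with (coef 1) by (unfold coef; simpl; field).
  replace (tau ^ 2 / 2 * I 2) with (coef 2) by (unfold coef; simpl; field).
  apply (@is_series_plus R_AbsRing R_NormedModule); [apply (@is_series_plus R_AbsRing R_NormedModule) |];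
    [apply (is_series_ext (fun n => coef (3 * n + 0)%nat)); [intros n; now rewrite Nat.add_0_r |] | |].
  all: apply is_series_coef_residue; try lra; intros n; rewrite Hratio; unfold z; simpl INR.
  all: pose proof (pos_INR n); field; repeat split; lra.
Qed.

End HypergeometricCoefficients.

(** * Moments of exp (-c x^6) *)

Definition sextic_weight (c : R) (m : nat) (x : R) : R := x ^ m * exp (- (c * x ^ 6)).

Definition sextic_moment (c : R) (m : nat) (b : R) : R := RInt (sextic_weight c m) 0 b.

Lemma ex_RInt_sextic_weight c m a b : ex_RInt (sextic_weight c m) a b.
Proof. apply ex_RInt_derivable. intros x. unfold sextic_weight. auto_derive. auto. Qed.

Lemma sextic_weight_ge0 c m x : 0 <= x -> 0 <= sextic_weight c m x.
Proof.
  intros Hx. apply Rmult_le_pos; [apply pow_le; lra | apply Rlt_le, exp_pos].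
Qed.

(* Integration by parts against [d/dx (x^(m+1) e^(-c x^6))]. *)
Lemma sextic_moment_add6 c m b : 0 < c ->
  sextic_moment c (m + 6) b
    = (INR m + 1) / (6 * c) * sextic_moment c m b - b ^ (m + 1) * exp (- (c * b ^ 6)) / (6 * c).
Proof.
  intros Hc.
  assert (Hparts : is_RInt (fun x => (INR m + 1) * sextic_weight c m x
                                     - 6 * c * sextic_weight c (m + 6) x)
                     0 b (b ^ (m + 1) * exp (- (c * b ^ 6)))).
  { replace (b ^ (m + 1) * exp (- (c * b ^ 6)))
      with (b ^ (m + 1) * exp (- (c * b ^ 6)) - 0 ^ (m + 1) * exp (- (c * 0 ^ 6)))
      by (rewrite pow_i by lia; ring).
    apply (@is_RInt_derive R_CompleteNormedModule (fun x => x ^ (m + 1) * exp (- (c * x ^ 6)))).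
    - intros x _. auto_derive; [auto |].
      replace (pred (m + 1)) with m by lia.
      unfold sextic_weight. rewrite !pow_add, plus_INR. simpl. ring.
    - intros x _. apply (@ex_derive_continuous R_AbsRing R_NormedModule).
      unfold sextic_weight. auto_derive. auto. }
  assert (Hlin : is_RInt (fun x => (INR m + 1) * sextic_weight c m x
                                   - 6 * c * sextic_weight c (m + 6) x)
                   0 b ((INR m + 1) * sextic_moment c m b - 6 * c * sextic_moment c (m + 6) b)).
  { apply (@is_RInt_minus R_NormedModule); apply (@is_RInt_scal R_NormedModule);
      apply is_RInt_RInt_R, ex_RInt_sextic_weight. }
  pose proof (eq_trans (eq_sym (RInt_unique_R _ _ _ _ Hlin)) (RInt_unique_R _ _ _ _ Hparts)).
  field_simplify_eq; lra.
Qed.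

Lemma sextic_moment_mono c m x y : 0 <= x <= y -> sextic_moment c m x <= sextic_moment c m y.
Proof.
  intros Hxy. unfold sextic_moment.
  rewrite <- (RInt_Chasles (sextic_weight c m) 0 x y) by apply ex_RInt_sextic_weight.
  assert (0 <= RInt (sextic_weight c m) x y).
  { apply RInt_ge_0; [lra | apply ex_RInt_sextic_weight |].
    intros t Ht. apply sextic_weight_ge0. lra. }
  unfold plus; simpl. lra.
Qed.

Lemma sextic_moment_low c m b : 0 < c -> (m <= 5)%nat -> 0 <= b ->
  sextic_moment c m b <= 1 + 1 / (6 * c).
Proof.
  intros Hc Hm Hb.
  apply Rle_trans with (sextic_moment c m (Rmax b 1));
    [apply sextic_moment_mono; split; [lra | apply Rmax_l] |].
  set (b' := Rmax b 1). assert (Hb' : 1 <= b') by apply Rmax_r.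
  unfold sextic_moment.
  rewrite <- (RInt_Chasles (sextic_weight c m) 0 1 b') by apply ex_RInt_sextic_weight.
  unfold plus; simpl. apply Rplus_le_compat.
  - apply Rle_trans with (RInt (fun _ => 1) 0 1).
    + apply RInt_le; [lra | apply ex_RInt_sextic_weight | apply ex_RInt_const |].
      intros x Hx. unfold sextic_weight.
      assert (x ^ m <= 1) by (rewrite <- (pow1 m); apply pow_incr; lra).
      assert (exp (- (c * x ^ 6)) <= 1).
      { rewrite <- exp_0. apply exp_le_compat. pose proof (pow_le x 6). nra. }
      pose proof (pow_le x m). pose proof (exp_pos (- (c * x ^ 6))). nra.
    + rewrite RInt_const. unfold scal; simpl; unfold mult; simpl. lra.
  - apply Rle_trans with (RInt (sextic_weight c 5) 1 b').
    + apply RInt_le; [lra | apply ex_RInt_sextic_weight | apply ex_RInt_sextic_weight |].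
      intros x Hx. unfold sextic_weight. apply Rmult_le_compat_r; [apply Rlt_le, exp_pos |].
      apply Rle_pow; [lra | lia].
    + rewrite (RInt_unique_R _ _ _ (exp (- c) / (6 * c) - exp (- (c * b' ^ 6)) / (6 * c))).
      { pose proof (exp_pos (- (c * b' ^ 6))). assert (exp (- c) <= 1) by
          (rewrite <- exp_0; apply exp_le_compat; lra).
        apply Rmult_le_reg_r with (6 * c); [lra |]. field_simplify; lra. }
      replace (exp (- c) / (6 * c) - exp (- (c * b' ^ 6)) / (6 * c))
        with ((- exp (- (c * b' ^ 6)) / (6 * c)) - (- exp (- (c * 1 ^ 6)) / (6 * c)))
        by (rewrite pow1, Rmult_1_r; field; lra).
      apply (@is_RInt_derive R_CompleteNormedModule (fun x => - exp (- (c * x ^ 6)) / (6 * c))).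
      * intros x _. auto_derive; [auto |]. unfold sextic_weight. simpl. field. lra.
      * intros x _. apply (@ex_derive_continuous R_AbsRing R_NormedModule).
        unfold sextic_weight. auto_derive. auto.
Qed.

Fixpoint sextic_moment_bound (c : R) (m : nat) : R :=
  match m with
  | S (S (S (S (S (S j))))) => (INR j + 1) / (6 * c) * sextic_moment_bound c j
  | _ => 1 + 1 / (6 * c)
  end.

Lemma sextic_moment_bound_add6 c m :
  sextic_moment_bound c (m + 6) = (INR m + 1) / (6 * c) * sextic_moment_bound c m.
Proof. replace (m + 6)%nat with (S (S (S (S (S (S m)))))) by lia. reflexivity. Qed.

Lemma sextic_moment_le_bound c m b : 0 < c -> 0 <= b ->
  sextic_moment c m b <= sextic_moment_bound c m.
Proof.
  intros Hc Hb. induction m as [m IH] using (well_founded_induction Wf_nat.lt_wf).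
  destruct (Nat.le_gt_cases m 5) as [Hm | Hm].
  - destruct m as [|[|[|[|[|[|m]]]]]]; try lia; now apply sextic_moment_low.
  - replace m with (m - 6 + 6)%nat by lia.
    rewrite sextic_moment_add6, sextic_moment_bound_add6 by lra.
    assert (0 <= b ^ (m - 6 + 1) * exp (- (c * b ^ 6)) / (6 * c)).
    { apply Rdiv_le_0_compat; [apply Rmult_le_pos; [apply pow_le; lra | apply Rlt_le, exp_pos] | lra]. }
    assert (0 <= (INR (m - 6) + 1) / (6 * c)) by (pose proof (pos_INR (m - 6)); apply Rdiv_le_0_compat; lra).
    specialize (IH (m - 6)%nat ltac:(lia)). nra.
Qed.

Lemma sextic_moment_bound_ge0 c m : 0 < c -> 0 <= sextic_moment_bound c m.
Proof.
  intros Hc. eapply Rle_trans; [| apply (sextic_moment_le_bound c m 0 Hc (Rle_refl 0))].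
  unfold sextic_moment. rewrite RInt_point. apply Rle_refl.
Qed.

(* [real] only unwraps the [Rbar]: the limit is finite by [is_lim_sextic_moment]. *)
Definition sextic_integral (m : nat) : R := real (Lim (sextic_moment 1 m) p_infty).

Lemma is_lim_sextic_moment m : is_lim (sextic_moment 1 m) p_infty (sextic_integral m).
Proof.
  destruct (ex_lim_p_infty_monotone_bounded (sextic_moment 1 m) (sextic_moment_bound 1 m))
    as [l Hl].
  - intros x y Hxy. now apply sextic_moment_mono.
  - intros x Hx. apply sextic_moment_le_bound; lra.
  - unfold sextic_integral. now rewrite (is_lim_unique _ _ _ Hl).
Qed.

Lemma sextic_integral_add6 m : sextic_integral (m + 6) = (INR m + 1) / 6 * sextic_integral m.
Proof.
  assert (Hlim : is_lim (sextic_moment 1 (m + 6)) p_infty ((INR m + 1) / 6 * sextic_integral m - 0 / 6)).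
  { apply (is_lim_ext (fun b => (INR m + 1) / 6 * sextic_moment 1 m b
                                 - b ^ (m + 1) * exp (- b ^ 6) / 6)).
    - intros b. rewrite sextic_moment_add6, !Rmult_1_l, Rmult_1_r by lra. reflexivity.
    - apply is_lim_minus'.
      + apply (is_lim_scal_l _ _ _ (Finite (sextic_integral m))), is_lim_sextic_moment.
      + apply (is_lim_scal_r _ _ _ (Finite 0)). apply is_lim_pow_mul_exp_opp_pow. lia. }
  apply is_lim_unique in Hlim. rewrite (is_lim_unique _ _ _ (is_lim_sextic_moment (m + 6))) in Hlim.
  injection Hlim as ->. field.
Qed.

(** * The Gaussian integral *)

Definition gauss_integral (x : R) : R := RInt (fun t => exp (- t ^ 2)) 0 x.

Definition gauss_aux_integrand (x t : R) : R := exp (- (x ^ 2 * (1 + t ^ 2))) / (1 + t ^ 2).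

Definition gauss_aux (x : R) : R := RInt (gauss_aux_integrand x) 0 1.

Lemma one_add_sqr_pos t : 0 < 1 + t ^ 2.
Proof. pose proof (pow2_ge_0 t). lra. Qed.

Lemma ex_RInt_gauss a b : ex_RInt (fun t => exp (- t ^ 2)) a b.
Proof. apply ex_RInt_derivable. intros t. auto_derive. auto. Qed.

Lemma ex_RInt_gauss_aux_integrand x a b : ex_RInt (gauss_aux_integrand x) a b.
Proof.
  apply ex_RInt_derivable. intros t. unfold gauss_aux_integrand. auto_derive.
  apply Rgt_not_eq, one_add_sqr_pos.
Qed.

Lemma is_derive_gauss_integral x : is_derive gauss_integral x (exp (- x ^ 2)).
Proof.
  apply (@is_derive_RInt R_NormedModule (fun t => exp (- t ^ 2)) gauss_integral 0 x).
  - apply filter_forall. intros b. apply is_RInt_RInt_R, ex_RInt_gauss.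
  - apply (@ex_derive_continuous R_AbsRing R_NormedModule). auto_derive. auto.
Qed.

Lemma Derive_gauss_aux_integrand u t :
  Derive (fun z => gauss_aux_integrand z t) u = -2 * u * exp (- (u ^ 2 * (1 + t ^ 2))).
Proof.
  apply is_derive_unique. unfold gauss_aux_integrand.
  pose proof (one_add_sqr_pos t). auto_derive; [auto |]. simpl. field. simpl in *. lra.
Qed.

(* Differentiation under the integral sign, then the substitution [u = x t]. *)
Lemma is_derive_gauss_aux x : is_derive gauss_aux x (-2 * exp (- x ^ 2) * gauss_integral x).
Proof.
  assert (Hparam : is_derive gauss_aux x
                     (RInt (fun t => Derive (fun u => gauss_aux_integrand u t) x) 0 1)).
  { apply (is_derive_RInt_param gauss_aux_integrand 0 1 x).
    - apply filter_forall. intros y t _. unfold gauss_aux_integrand. auto_derive. auto.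
    - intros t _.
      apply continuity_2d_pt_ext with (fun u v => -2 * u * exp (- (u ^ 2 * (1 + v ^ 2)))).
      { intros u v. now rewrite Derive_gauss_aux_integrand. }
      apply continuity_2d_pt_mult.
      + apply continuity_2d_pt_mult; [apply continuity_2d_pt_const | apply continuity_2d_pt_id1].
      + apply continuity_1d_2d_pt_comp; [apply derivable_continuous_pt, derivable_pt_exp |].
        apply continuity_2d_pt_opp, continuity_2d_pt_mult.
        * apply continuity_2d_pt_ext with (fun u v => u * u); [intros; ring |].
          apply continuity_2d_pt_mult; apply continuity_2d_pt_id1.
        * apply continuity_2d_pt_plus; [apply continuity_2d_pt_const |].
          apply continuity_2d_pt_ext with (fun u v => v * v); [intros; ring |].
          apply continuity_2d_pt_mult; apply continuity_2d_pt_id2.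
    - apply filter_forall. intros y. apply ex_RInt_gauss_aux_integrand. }
  replace (-2 * exp (- x ^ 2) * gauss_integral x)
    with (RInt (fun t => Derive (fun u => gauss_aux_integrand u t) x) 0 1); [exact Hparam |].
  rewrite (RInt_ext _ (fun t => (-2 * exp (- x ^ 2)) * scal x (exp (- (x * t + 0) ^ 2)))).
  2:{ intros t _. rewrite Derive_gauss_aux_integrand. change (scal x ?y) with (x * y).
      replace (- (x ^ 2 * (1 + t ^ 2))) with (- x ^ 2 + - (x * t + 0) ^ 2) by ring.
      rewrite exp_plus. match goal with |- ?A = ?B => change (@eq R A B) end. ring. }
  rewrite (@RInt_scal R_CompleteNormedModule (fun t => scal x (exp (- (x * t + 0) ^ 2)))).
  - rewrite (@RInt_comp_lin R_CompleteNormedModule (fun t => exp (- t ^ 2))).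
    + unfold gauss_integral. rewrite Rmult_0_r, Rmult_1_r, !Rplus_0_r. reflexivity.
    + apply ex_RInt_gauss.
  - apply (ex_RInt_ext (fun t => x * exp (- (x * t + 0) ^ 2))); [reflexivity |].
    apply ex_RInt_derivable. intros t. auto_derive. auto.
Qed.

Lemma gauss_aux_0 : gauss_aux 0 = PI / 4.
Proof.
  unfold gauss_aux. rewrite <- atan_1.
  replace (atan 1) with (atan 1 - atan 0) by (rewrite atan_0; ring).
  apply RInt_unique_R, (is_RInt_ext (fun t => / (1 + t ^ 2))).
  - intros t _. unfold gauss_aux_integrand. rewrite pow_i, Rmult_0_l, Ropp_0, exp_0 by lia.
    unfold Rdiv. rewrite Rmult_1_l. reflexivity.
  - apply (@is_RInt_derive R_CompleteNormedModule atan).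
    + intros t _. replace (/ (1 + t ^ 2)) with (/ (1 + t²)) by (unfold Rsqr; simpl; f_equal; ring).
      apply is_derive_atan.
    + intros t _. apply (@ex_derive_continuous R_AbsRing R_NormedModule). auto_derive.
      apply Rgt_not_eq, one_add_sqr_pos.
Qed.

Lemma gauss_aux_add_sqr x : gauss_aux x + gauss_integral x ^ 2 = PI / 4.
Proof.
  assert (Hconst : forall a b, a < b ->
            gauss_aux a + gauss_integral a ^ 2 = gauss_aux b + gauss_integral b ^ 2).
  { intros a b Hab.
    apply (@eq_is_derive R_NormedModule (fun y => gauss_aux y + gauss_integral y ^ 2)); [| exact Hab].
    intros t _. replace (@zero R_NormedModule) with
      (-2 * exp (- t ^ 2) * gauss_integral t + 2 * exp (- t ^ 2) * gauss_integral t)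
      by (change (@zero R_NormedModule) with 0; ring).
    apply (is_derive_plus gauss_aux (fun y => gauss_integral y ^ 2)); [apply is_derive_gauss_aux |].
    replace (2 * exp (- t ^ 2) * gauss_integral t)
      with (INR 2 * exp (- t ^ 2) * gauss_integral t ^ pred 2) by (simpl; ring).
    apply (is_derive_pow gauss_integral 2), is_derive_gauss_integral. }
  rewrite <- gauss_aux_0.
  replace (gauss_aux 0) with (gauss_aux 0 + gauss_integral 0 ^ 2)
    by (unfold gauss_integral; rewrite RInt_point; change (@zero R_CompleteNormedModule) with 0; ring).
  destruct (Rtotal_order x 0) as [Hlt | [-> | Hgt]]; [now apply Hconst | reflexivity |].
  symmetry. now apply Hconst.
Qed.

Lemma gauss_aux_bounds x : 0 <= gauss_aux x <= exp (- x ^ 2).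
Proof.
  unfold gauss_aux. split.
  - apply RInt_ge_0; [lra | apply ex_RInt_gauss_aux_integrand |]. intros t _.
    apply Rdiv_le_0_compat; [apply Rlt_le, exp_pos | apply one_add_sqr_pos].
  - apply Rle_trans with (RInt (fun _ => exp (- x ^ 2)) 0 1).
    + apply RInt_le; [lra | apply ex_RInt_gauss_aux_integrand | apply ex_RInt_const |].
      intros t Ht. unfold gauss_aux_integrand.
      pose proof (one_add_sqr_pos t). pose proof (pow2_ge_0 t). pose proof (pow2_ge_0 x).
      assert (exp (- (x ^ 2 * (1 + t ^ 2))) <= exp (- x ^ 2)) by (apply exp_le_compat; nra).
      pose proof (exp_pos (- (x ^ 2 * (1 + t ^ 2)))).
      apply Rmult_le_reg_r with (1 + t ^ 2); [lra |].
      unfold Rdiv. rewrite Rmult_assoc, Rinv_l by lra. nra.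
    + rewrite RInt_const. unfold scal; simpl; unfold mult; simpl. lra.
Qed.

Lemma is_lim_gauss_integral : is_lim gauss_integral p_infty (sqrt PI / 2).
Proof.
  assert (Haux : is_lim gauss_aux p_infty 0).
  { apply (is_lim_le_le_loc (fun _ => 0) (fun x => x ^ 0 * exp (- x ^ 2))).
    - exists 0. intros x _. rewrite pow_O, Rmult_1_l. apply gauss_aux_bounds.
    - apply is_lim_const.
    - apply is_lim_pow_mul_exp_opp_pow. lia. }
  replace (sqrt PI / 2) with (sqrt (PI / 4 - 0)).
  2:{ rewrite Rminus_0_r, sqrt_div_alt by lra. replace 4 with (2 ^ 2) by ring.
      rewrite sqrt_pow2; lra. }
  apply (is_lim_ext_loc (fun x => sqrt (PI / 4 - gauss_aux x))).
  - exists 0. intros x Hx. rewrite <- (gauss_aux_add_sqr x), Rplus_minus_swap, Rminus_eq_0, Rplus_0_l.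
    apply sqrt_pow2. unfold gauss_integral.
    apply RInt_ge_0; [lra | apply ex_RInt_gauss |]. intros t _. apply Rlt_le, exp_pos.
  - apply (is_lim_comp_continuous (fun x => PI / 4 - gauss_aux x) sqrt p_infty (PI / 4 - 0)).
    + apply is_lim_minus'; [apply is_lim_const | exact Haux].
    + apply continuous_sqrt.
Qed.

(** * Values of the moments *)

Definition root6 (t : R) : R := Rpower t (1 / 6).

Lemma root6_pos t : 0 < root6 t.
Proof. apply exp_pos. Qed.

Lemma root6_pow6 t : 0 < t -> root6 t ^ 6 = t.
Proof.
  intros Ht. unfold root6. rewrite <- Rpower_pow by apply exp_pos.
  rewrite Rpower_mult. replace (1 / 6 * INR 6) with 1 by (simpl; field). apply Rpower_1, Ht.
Qed.

Lemma root6_of_pow6 d : 0 < d -> root6 (d ^ 6) = d.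
Proof.
  intros Hd. unfold root6. rewrite <- Rpower_pow, Rpower_mult by exact Hd.
  replace (INR 6 * (1 / 6)) with 1 by (simpl; field). apply Rpower_1, Hd.
Qed.

Lemma root6_lt t u : 0 < t < u -> root6 t < root6 u.
Proof. intros Htu. apply Rlt_Rpower_l; lra. Qed.

Lemma root6_at_right_0 : filterlim root6 (at_right 0) (locally 0).
Proof.
  intros P [eps HP].
  assert (Heps6 : 0 < eps ^ 6) by (apply pow_lt, cond_pos).
  exists (mkposreal _ Heps6). intros t Ht Ht0.
  apply HP. change (Rabs (root6 t - 0) < eps).
  change (Rabs (t - 0) < eps ^ 6) in Ht. rewrite Rminus_0_r, Rabs_pos_eq in * by lra.
  pose proof (root6_pos t).
  rewrite Rabs_pos_eq by lra. rewrite <- (root6_of_pow6 eps (cond_pos eps)).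
  apply root6_lt. lra.
Qed.

Lemma is_lim_root6 : is_lim root6 p_infty p_infty.
Proof.
  apply is_lim_spec. intros M.
  exists (Rmax M 1 ^ 6). intros t Ht.
  assert (H1 : 1 <= Rmax M 1) by apply Rmax_r.
  eapply Rle_lt_trans; [apply Rmax_l |].
  rewrite <- (root6_of_pow6 (Rmax M 1)) by lra.
  apply root6_lt. split; [apply pow_lt |]; lra.
Qed.

Lemma Gamma_integrand_continuous s t : 0 < t -> continuous (fun u => Rpower u (s - 1) * exp (- u)) t.
Proof.
  intros Ht. apply (@ex_derive_continuous R_AbsRing R_NormedModule).
  unfold Rpower. auto_derive. exact Ht.
Qed.

(* Substitution [t = x^6]. *)
Lemma is_RInt_Gamma_integrand m a b : 0 < a -> 0 < b ->
  is_RInt (fun t => Rpower t ((INR m + 1) / 6 - 1) * exp (- t)) a b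
    (6 * sextic_moment 1 m (root6 b) - 6 * sextic_moment 1 m (root6 a)).
Proof.
  intros Ha Hb.
  set (g := fun t => Rpower t ((INR m + 1) / 6 - 1) * exp (- t)).
  assert (Hpull : is_RInt (fun x => 6 * sextic_weight 1 m x) (root6 a) (root6 b) (RInt g a b)).
  { rewrite <- (root6_pow6 a Ha), <- (root6_pow6 b Hb) at 2.
    pose proof (root6_pos a). pose proof (root6_pos b).
    assert (Hmin : 0 < Rmin (root6 a) (root6 b)) by (apply Rmin_glb_lt; lra).
    eapply is_RInt_ext; [| apply (@is_RInt_comp R_CompleteNormedModule g (fun x => x ^ 6) (fun x => 6 * x ^ 5))].
    - intros x Hx. assert (Hx0 : 0 < x) by lra.
      change (scal (6 * x ^ 5) (g (x ^ 6))) with (6 * x ^ 5 * g (x ^ 6)). unfold g, sextic_weight.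
      rewrite <- (Rpower_pow 6 x Hx0), Rpower_mult, <- (Rpower_pow 5 x Hx0), <- (Rpower_pow m x Hx0).
      rewrite Rmult_1_l, Rmult_assoc, <- (Rmult_assoc (Rpower x (INR 5))), <- Rpower_plus.
      f_equal. f_equal. f_equal. simpl. field.
    - intros x Hx. apply Gamma_integrand_continuous, pow_lt. lra.
    - intros x _. split; [auto_derive; [auto | simpl; ring] |].
      apply (@ex_derive_continuous R_AbsRing R_NormedModule). auto_derive. auto. }
  assert (Hmoments : is_RInt (fun x => 6 * sextic_weight 1 m x) (root6 a) (root6 b)
                       (6 * sextic_moment 1 m (root6 b) - 6 * sextic_moment 1 m (root6 a))).
  { replace (6 * sextic_moment 1 m (root6 b) - 6 * sextic_moment 1 m (root6 a))
      with (6 * RInt (sextic_weight 1 m) (root6 a) (root6 b)).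
    - apply (@is_RInt_scal R_NormedModule), is_RInt_RInt_R, ex_RInt_sextic_weight.
    - unfold sextic_moment.
      rewrite <- (RInt_Chasles (sextic_weight 1 m) 0 (root6 a) (root6 b)) by apply ex_RInt_sextic_weight.
      unfold plus; simpl. ring. }
  rewrite <- (RInt_unique_R _ _ _ _ Hmoments), (RInt_unique_R _ _ _ _ Hpull).
  apply is_RInt_RInt_R, (@ex_RInt_continuous R_CompleteNormedModule).
  intros t Ht. apply Gamma_integrand_continuous.
  assert (0 < Rmin a b) by (apply Rmin_glb_lt; lra). lra.
Qed.

Lemma Gamma_sextic_integral m : Gamma ((INR m + 1) / 6) = 6 * sextic_integral m.
Proof.
  unfold Gamma.
  apply (@is_RInt_gen_unique R_CompleteNormedModule _ _
           (Proper_StrongProper _ (at_right_proper_filter 0))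
           (Proper_StrongProper _ (Rbar_locally_filter p_infty))).
  replace (6 * sextic_integral m) with (6 * sextic_integral m - 6 * sextic_moment 1 m 0)
    by (unfold sextic_moment; rewrite RInt_point; change (zero : R) with 0; ring).
  apply (is_RInt_gen_primitive _ (fun t => 6 * sextic_moment 1 m (root6 t))).
  - apply (Filter_prod _ _ _ (fun a => 0 < a) (fun b => 0 < b)).
    + exists (mkposreal 1 Rlt_0_1). intros t _ Ht. exact Ht.
    + exists 0. auto.
    + intros a b Ha Hb. now apply is_RInt_Gamma_integrand.
  - apply (filterlim_comp _ _ _ root6 (fun y => 6 * sextic_moment 1 m y) _ (locally 0) _
             root6_at_right_0).
    apply (@ex_derive_continuous R_AbsRing R_NormedModule (fun y => 6 * sextic_moment 1 m y) 0).
    apply ex_derive_scal. exists (sextic_weight 1 m 0).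
    apply (@is_derive_RInt R_NormedModule _ _ 0).
    + apply filter_forall. intros b. apply is_RInt_RInt_R, ex_RInt_sextic_weight.
    + apply (@ex_derive_continuous R_AbsRing R_NormedModule).
      unfold sextic_weight. auto_derive. auto.
  - apply (is_lim_scal_l _ 6 p_infty (Finite (sextic_integral m))).
    apply (is_lim_comp _ _ p_infty (Finite (sextic_integral m)) p_infty).
    + apply is_lim_sextic_moment.
    + apply is_lim_root6.
    + apply filter_forall. discriminate.
Qed.

(* Substitution [u = x^3]. *)
Lemma sextic_moment_2 b : sextic_moment 1 2 b = gauss_integral (b ^ 3) / 3.
Proof.
  assert (Hsub : is_RInt (fun x => 3 * sextic_weight 1 2 x) 0 b (gauss_integral (b ^ 3))).
  { unfold gauss_integral.
    replace (RInt (fun u => exp (- u ^ 2)) 0 (b ^ 3))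
      with (RInt (fun u => exp (- u ^ 2)) (0 ^ 3) (b ^ 3)) by (rewrite pow_i by lia; reflexivity).
    eapply is_RInt_ext; [| apply (@is_RInt_comp R_CompleteNormedModule (fun u => exp (- u ^ 2))
                                    (fun x => x ^ 3) (fun x => 3 * x ^ 2))].
    - intros x _. unfold sextic_weight. change (scal ?k ?y) with (k * y).
      rewrite Rmult_1_l, <- pow_mult. simpl. ring.
    - intros x _. apply (@ex_derive_continuous R_AbsRing R_NormedModule). auto_derive. auto.
    - intros x _. split; [auto_derive; [auto | simpl; ring] |].
      apply (@ex_derive_continuous R_AbsRing R_NormedModule). auto_derive. auto. }
  assert (Hscal : is_RInt (fun x => 3 * sextic_weight 1 2 x) 0 b (3 * sextic_moment 1 2 b))
    by apply (@is_RInt_scal R_NormedModule), is_RInt_RInt_R, ex_RInt_sextic_weight.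
  rewrite <- (RInt_unique_R _ _ _ _ Hsub), (RInt_unique_R _ _ _ _ Hscal). field.
Qed.

Lemma sextic_integral_2 : sextic_integral 2 = sqrt PI / 6.
Proof.
  assert (Hcube : is_lim (fun b => b ^ 3) p_infty p_infty).
  { apply (is_lim_le_p_loc (fun b => b)); [| apply is_lim_id].
    exists 1. intros b Hb. simpl. nra. }
  assert (Hlim : is_lim (sextic_moment 1 2) p_infty (sqrt PI / 2 / 3)).
  { apply (is_lim_ext (fun b => gauss_integral (b ^ 3) / 3));
      [intros b; symmetry; apply sextic_moment_2 |].
    apply (is_lim_scal_r _ _ _ (Finite (sqrt PI / 2))).
    apply (is_lim_comp gauss_integral (fun b => b ^ 3) p_infty (sqrt PI / 2) p_infty);
      [apply is_lim_gauss_integral | exact Hcube | apply filter_forall; discriminate]. }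
  apply is_lim_unique in Hlim.
  rewrite (is_lim_unique _ _ _ (is_lim_sextic_moment 2)) in Hlim.
  injection Hlim as ->. field.
Qed.

Lemma sextic_integral_8 : sextic_integral 8 = sqrt PI / 12.
Proof.
  change 8%nat with (2 + 6)%nat. rewrite sextic_integral_add6, sextic_integral_2. simpl. field.
Qed.

(** * Termwise integration *)

Lemma quartic_le_sextic s x : 0 <= s -> s * x ^ 4 <= 4 * s ^ 3 + x ^ 6 / 2.
Proof.
  intros Hs. pose proof (pow2_ge_0 x) as Hy. set (y := x ^ 2) in Hy.
  replace (x ^ 4) with (y ^ 2) by (unfold y; ring).
  replace (x ^ 6) with (y ^ 3) by (unfold y; ring).
  destruct (Rle_lt_dec (2 * s) y).
  - assert (0 <= s * y ^ 2) by (apply Rmult_le_pos; [lra | apply pow2_ge_0]).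
    pose proof (pow_le s 3 Hs). nra.
  - assert (y ^ 2 <= 4 * s ^ 2) by nra. pose proof (pow_le y 3 Hy). nra.
Qed.

Definition taylor_moment_bound (r : R) (M : nat) : R :=
  r ^ M / INR (fact M) * sextic_moment_bound (1 / 2) (4 * M).

Lemma taylor_moment_bound_ge0 r M : 0 <= r -> 0 <= taylor_moment_bound r M.
Proof.
  intros Hr. apply Rmult_le_pos; [| apply sextic_moment_bound_ge0; lra].
  apply Rdiv_le_0_compat; [apply pow_le, Hr | apply INR_fact_pos].
Qed.

(* The step [M -> M + 3] multiplies by [r^3 (4M+1)(4M+7) / (9 (M+1)(M+2)(M+3))]. *)
Lemma taylor_moment_bound_add3 r M : 0 <= r -> 4 * r ^ 3 <= INR M ->
  taylor_moment_bound r (M + 3) <= taylor_moment_bound r M / 2.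
Proof.
  intros Hr HM. pose proof (taylor_moment_bound_ge0 r M Hr) as HX. unfold taylor_moment_bound in *.
  replace (4 * (M + 3))%nat with (4 * M + 6 + 6)%nat by lia.
  rewrite !sextic_moment_bound_add6, pow_add.
  replace (M + 3)%nat with (S (S (S M))) by lia.
  rewrite !fact_simpl, !plus_INR, !mult_INR, !S_INR. simpl (INR 0).
  pose proof (pos_INR M). pose proof (INR_fact_pos M).
  set (m := INR M) in *. set (X := r ^ M / INR (fact M) * sextic_moment_bound (1 / 2) (4 * M)) in *.
  match goal with |- ?L <= _ => replace L with
    (X * (r ^ 3 * ((4 * m + 7) * (4 * m + 1)) / (9 * ((m + 1) * (m + 2) * (m + 3)))))
    by (unfold X; field; repeat split; lra) end.
  assert (Hden : 0 < (m + 1) * (m + 2) * (m + 3)) by (repeat apply Rmult_lt_0_compat; lra).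
  assert (Hq : r ^ 3 * ((4 * m + 7) * (4 * m + 1)) <= 9 * ((m + 1) * (m + 2) * (m + 3)) / 2).
  { assert (Hprod : (4 * m + 7) * (4 * m + 1) <= 16 * ((m + 1) * (m + 2))) by nra.
    assert (0 <= r ^ 3 <= m / 4) by (split; [apply pow_le, Hr | lra]).
    assert (0 <= (m + 1) * (m + 2)) by nra. nra. }
  assert (r ^ 3 * ((4 * m + 7) * (4 * m + 1)) / (9 * ((m + 1) * (m + 2) * (m + 3))) <= 1 / 2).
  { apply Rmult_le_reg_r with (9 * ((m + 1) * (m + 2) * (m + 3))); [lra |].
    unfold Rdiv. rewrite Rmult_assoc, Rinv_l, Rmult_1_r by lra. lra. }
  nra.
Qed.

Lemma is_lim_seq_taylor_moment_bound r : 0 <= r -> is_lim_seq (taylor_moment_bound r) 0.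
Proof.
  intros Hr. destruct (INR_unbounded (4 * r ^ 3)) as [N0 HN0].
  apply (is_lim_seq_0_eventually_halving _ 3 N0); [lia | intros M; now apply taylor_moment_bound_ge0 |].
  intros M HM. apply taylor_moment_bound_add3; [exact Hr |].
  pose proof (le_INR _ _ HM). lra.
Qed.

Section TaylorExpansion.

Variable tau : R.

Let f (x : R) : R := exp (- x ^ 6 + tau * x ^ 4).

Let term (k : nat) (x : R) : R := tau ^ k / INR (fact k) * sextic_weight 1 (4 * k) x.

Let error (N : nat) : R := exp (4 * Rabs tau ^ 3) * taylor_moment_bound (Rabs tau) (S N).

Lemma ex_RInt_expansion_integrand a b : ex_RInt f a b.
Proof. apply ex_RInt_derivable. intros x. unfold f. auto_derive. auto. Qed.

(* The Taylor remainder of [e^(tau x^4)] costs a factor [e^(|tau| x^4)], which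
   [quartic_le_sextic] trades for half of the Gaussian-like decay [e^(-x^6)]. *)
Lemma expansion_integrand_remainder N x : 0 <= x ->
  Rabs (f x - sum_n (fun k => term k x) N)
    <= exp (4 * Rabs tau ^ 3) * (Rabs tau ^ S N / INR (fact (S N))) * sextic_weight (1 / 2) (4 * S N) x.
Proof.
  intros Hx.
  assert (Hsum : sum_n (fun k => term k x) N
                 = exp (- x ^ 6) * sum_n (fun k => (tau * x ^ 4) ^ k / INR (fact k)) N).
  { rewrite <- (@sum_n_mult_l R_Ring). apply sum_n_ext. intros k.
    unfold term, sextic_weight. rewrite Rmult_1_l, pow_mult, Rpow_mult_distr. unfold mult; simpl.
    pose proof (INR_fact_pos k). field. lra. }
  unfold f. rewrite Hsum, exp_plus, <- Rmult_minus_distr_l, Rabs_mult, (Rabs_pos_eq (exp _))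
    by apply Rlt_le, exp_pos.
  pose proof (exp_sub_sum_n_le (tau * x ^ 4) N) as Htaylor.
  assert (Hx4 : 0 <= x ^ 4) by (apply pow_le; lra).
  rewrite Rabs_mult, (Rabs_pos_eq (x ^ 4) Hx4), Rpow_mult_distr, <- pow_mult in Htaylor.
  assert (Hdecay : exp (- x ^ 6) * exp (Rabs tau * x ^ 4)
                   <= exp (4 * Rabs tau ^ 3) * exp (- (1 / 2 * x ^ 6))).
  { rewrite <- !exp_plus. apply exp_le_compat.
    pose proof (quartic_le_sextic (Rabs tau) x (Rabs_pos tau)). lra. }
  assert (Hcoef : 0 <= Rabs tau ^ S N / INR (fact (S N)) * x ^ (4 * S N)).
  { apply Rmult_le_pos; [apply Rdiv_le_0_compat; [apply pow_le, Rabs_pos | apply INR_fact_pos] |].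
    apply pow_le. lra. }
  eapply Rle_trans; [apply Rmult_le_compat_l; [apply Rlt_le, exp_pos | exact Htaylor] |].
  unfold sextic_weight.
  replace (exp (- x ^ 6) * (Rabs tau ^ S N * x ^ (4 * S N) / INR (fact (S N)) * exp (Rabs tau * x ^ 4)))
    with ((Rabs tau ^ S N / INR (fact (S N)) * x ^ (4 * S N)) * (exp (- x ^ 6) * exp (Rabs tau * x ^ 4)))
    by (pose proof (INR_fact_pos (S N)); field; lra).
  replace (exp (4 * Rabs tau ^ 3) * (Rabs tau ^ S N / INR (fact (S N)))
           * (x ^ (4 * S N) * exp (- (1 / 2 * x ^ 6))))
    with ((Rabs tau ^ S N / INR (fact (S N)) * x ^ (4 * S N))
          * (exp (4 * Rabs tau ^ 3) * exp (- (1 / 2 * x ^ 6)))) by ring.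
  now apply Rmult_le_compat_l.
Qed.

Lemma expansion_integral_remainder N b : 0 <= b ->
  Rabs (RInt f 0 b - sum_n (fun k => tau ^ k / INR (fact k) * sextic_moment 1 (4 * k) b) N)
    <= error N.
Proof.
  intros Hb.
  set (D := exp (4 * Rabs tau ^ 3) * (Rabs tau ^ S N / INR (fact (S N)))).
  set (h := fun x => f x - sum_n (fun k => term k x) N).
  assert (Hh : is_RInt h 0 b
                 (RInt f 0 b - sum_n (fun k => tau ^ k / INR (fact k) * sextic_moment 1 (4 * k) b) N)).
  { apply (@is_RInt_minus R_NormedModule); [apply is_RInt_RInt_R, ex_RInt_expansion_integrand |].
    apply is_RInt_sum_n. intros k.
    apply (@is_RInt_scal R_NormedModule), is_RInt_RInt_R, ex_RInt_sextic_weight. }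
  assert (Hdom : is_RInt (fun x => D * sextic_weight (1 / 2) (4 * S N) x) 0 b
                   (D * sextic_moment (1 / 2) (4 * S N) b))
    by apply (@is_RInt_scal R_NormedModule), is_RInt_RInt_R, ex_RInt_sextic_weight.
  eapply Rle_trans;
    [apply (@norm_RInt_le R_NormedModule h _ 0 b _ _ Hb) with (2 := Hh) (3 := Hdom) |].
  - intros x Hx. apply expansion_integrand_remainder. lra.
  - unfold error, taylor_moment_bound, D. rewrite <- Rmult_assoc.
    apply Rmult_le_compat_l; [| apply sextic_moment_le_bound; lra].
    apply Rmult_le_pos; [apply Rlt_le, exp_pos |].
    apply Rdiv_le_0_compat; [apply pow_le, Rabs_pos | apply INR_fact_pos].
Qed.

Lemma is_lim_seq_error : is_lim_seq error 0.
Proof.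
  replace (Finite 0) with (Rbar_mult (exp (4 * Rabs tau ^ 3)) 0) by (simpl; f_equal; ring).
  apply is_lim_seq_scal_l. apply -> (is_lim_seq_incr_1 (taylor_moment_bound (Rabs tau))).
  apply is_lim_seq_taylor_moment_bound, Rabs_pos.
Qed.

Lemma is_lim_RInt_expansion_integrand :
  is_lim (fun b => RInt f 0 b) p_infty
    (sextic_integral 0 * hyp2F2 (1 / 12) (7 / 12) (1 / 3) (2 / 3) (4 * tau ^ 3 / 27)
     + tau * sextic_integral 4 * hyp2F2 (5 / 12) (11 / 12) (2 / 3) (4 / 3) (4 * tau ^ 3 / 27)
     + tau ^ 2 / 2 * sextic_integral 8 * hyp2F2 (3 / 4) (5 / 4) (4 / 3) (5 / 3) (4 * tau ^ 3 / 27)).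
Proof.
  apply (is_lim_uniform_approx _
           (fun M b => sum_n (fun k => tau ^ k / INR (fact k) * sextic_moment 1 (4 * k) b) (3 * M + 2))
           (fun M => sum_n (fun k => tau ^ k / INR (fact k) * sextic_integral (4 * k)) (3 * M + 2))
           (fun M => error (3 * M + 2))).
  - intros M. apply is_lim_sum_n. intros k.
    apply (is_lim_scal_l _ _ _ (Finite (sextic_integral (4 * k)))), is_lim_sextic_moment.
  - intros M b Hb. now apply expansion_integral_remainder.
  - apply (is_lim_seq_subseq error 0 (fun M => 3 * M + 2)%nat); [| apply is_lim_seq_error].
    intros P [N HN]. exists N. intros M HM. apply HN. lia.
  - eapply is_lim_seq_ext; [intros M; symmetry; apply sum_n_group3 |].
    apply (is_series_coef_grouped tau (fun k => sextic_integral (4 * k))).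
    intros k. replace (4 * (k + 3))%nat with (4 * k + 6 + 6)%nat by lia.
    rewrite !sextic_integral_add6, !plus_INR, mult_INR. simpl. field.
Qed.

End TaylorExpansion.

Theorem lemma6p3 (tau : R) :
  is_RInt_gen (fun x => exp (- x ^ 6 + tau * x ^ 4))
    (Rbar_locally m_infty) (Rbar_locally p_infty)
    (1 / 3 * Gamma (1 / 6)
       * hyp2F2 (1 / 12) (7 / 12) (1 / 3) (2 / 3) (4 * tau ^ 3 / 27)
     + 1 / 3 * tau * Gamma (5 / 6)
       * hyp2F2 (5 / 12) (11 / 12) (2 / 3) (4 / 3) (4 * tau ^ 3 / 27)
     + tau ^ 2 * sqrt PI / 12
       * hyp2F2 (3 / 4) (5 / 4) (4 / 3) (5 / 3) (4 * tau ^ 3 / 27)).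
Proof.
  pose proof (ex_RInt_expansion_integrand tau) as Hex.
  pose proof (is_lim_RInt_expansion_integrand tau) as Hplus.
  set (L := sextic_integral 0 * _ + _ + _) in Hplus.
  assert (Heven : forall y, exp (- (- y) ^ 6 + tau * (- y) ^ 4) = exp (- y ^ 6 + tau * y ^ 4))
    by (intros y; f_equal; ring).
  pose proof (is_lim_RInt_m_infty_even _ L Heven Hex Hplus) as Hminus.
  assert (HGamma0 : Gamma (1 / 6) = 6 * sextic_integral 0)
    by (rewrite <- Gamma_sextic_integral; f_equal; simpl; field).
  assert (HGamma4 : Gamma (5 / 6) = 6 * sextic_integral 4)
    by (rewrite <- Gamma_sextic_integral; f_equal; simpl; field).
  rewrite HGamma0, HGamma4, <- (Rmult_1_l (sqrt PI)).
  replace (1 * sqrt PI) with (12 * sextic_integral 8) by (rewrite sextic_integral_8; field).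
  replace (_ + _ + _) with (L - - L) by (unfold L; field).
  exact (is_RInt_gen_of_is_lim _ _ _ Hex Hminus Hplus).
Qed.
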